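(* Let $\mathcal{R}$ be a proper reflective subcategory of the category of groups with reflector $L$ and unit $\eta_G:G\to LG$. Then $K(G)=\operatorname{Ker}(\eta_G:G\to LG)$ defines a non-trivial subfunctor of the identity functor on the category of groups.
   Context: A full subcategory $\mathcal{R}$ of the category of groups is reflective if the inclusion functor has a left adjoint $L$ (the reflector), with unit $\eta$. It is proper if it is closed under isomorphisms and not equal to the whole category of groups. A subfunctor $K$ of the identity functor assigns to each group $G$ a subgroup $K(G)\subseteq G$ with $f(K(G))\subseteq K(G')$ for every homomorphism $f:G\to G'$; it is non-trivial if $K(G)\neq 1$ for some $G$. *)

Record Grp : Type := MkGrp {
  carrier :> Type;
  gmul : carrier -> carrier -> carrier;
  gone : carrier;
  ginv : carrier -> carrier;
  gmulA : forall x y z, gmul x (gmul y z) = gmul (gmul x y) z;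
  gmul1l : forall x, gmul gone x = x;
  gmul1r : forall x, gmul x gone = x;
  gmulVl : forall x, gmul (ginv x) x = gone;
  gmulVr : forall x, gmul x (ginv x) = gone
}.

Arguments gmul {g} _ _.
Arguments gone {g}.
Arguments ginv {g} _.

Record Hom (G H : Grp) : Type := MkHom {
  hfun :> G -> H;
  hmul : forall x y, hfun (gmul x y) = gmul (hfun x) (hfun y)
}.

Arguments hfun {G H} _ _.

Definition isomorphic (G H : Grp) : Prop :=
  exists (f : Hom G H) (g : Hom H G),
    (forall x, g (f x) = x) /\ (forall y, f (g y) = y).

(* A full subcategory is given by a class of groups [R].
   It is closed under isomorphisms and proper. *)
Definition iso_closed (R : Grp -> Prop) : Prop :=
  forall G H : Grp, isomorphic G H -> R G -> R H.

Definition proper_class (R : Grp -> Prop) : Prop :=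
  iso_closed R /\ exists G : Grp, ~ R G.

(* [L] with unit [eta] is a reflector onto the full subcategory [R]:
   the inclusion has left adjoint [L] with unit [eta], i.e. each
   [eta G : G -> L G] is a universal arrow from [G] to the inclusion
   (morphisms are compared extensionally). *)
Definition is_reflection (R : Grp -> Prop) (L : Grp -> Grp)
    (eta : forall G : Grp, Hom G (L G)) : Prop :=
  (forall G, R (L G)) /\
  (forall (G H : Grp), R H -> forall f : Hom G H,
     (exists g : Hom (L G) H, forall x, g (eta G x) = f x) /\
     (forall g1 g2 : Hom (L G) H,
        (forall x, g1 (eta G x) = f x) ->
        (forall x, g2 (eta G x) = f x) ->
        forall y, g1 y = g2 y)).

(* A subfunctor of the identity functor on groups: a subgroup K(G) of every
   group G, given as a predicate, with f(K(G)) ⊆ K(G') for every hom f. *)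
Definition is_subgroup (G : Grp) (S : G -> Prop) : Prop :=
  S gone /\ (forall x y, S x -> S y -> S (gmul x y)) /\
  (forall x, S x -> S (ginv x)).

Definition subfunctor_id (K : forall G : Grp, G -> Prop) : Prop :=
  (forall G, is_subgroup G (K G)) /\
  (forall (G H : Grp) (f : Hom G H) (x : G), K G x -> K H (f x)).

Definition nontrivial_subfunctor (K : forall G : Grp, G -> Prop) : Prop :=
  exists (G : Grp) (x : G), K G x /\ x <> gone.

Definition unit_kernel (L : Grp -> Grp) (eta : forall G : Grp, Hom G (L G))
    (G : Grp) (x : G) : Prop :=
  eta G x = gone.

(* If every unit [eta G] had trivial kernel, every unit would be injective,
   and then [eta G] would be an epimorphism in the whole category of groups:
   two homomorphisms [L G -> X] agreeing on the image of [eta G] agree after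
   composing with the injective [eta X], where [L X] lies in [R] and the
   universal property applies.  Epimorphisms of groups are surjective (a
   proper subgroup [M] of [A] is separated by two actions of [A] on its
   subsets), so every [eta G] would be an isomorphism and every group would
   lie in [R], contradicting properness. *)

From Stdlib Require Import Classical ClassicalEpsilon FunctionalExtensionality
  PropExtensionality ProofIrrelevance.

Section GroupFacts.
Variable G : Grp.

Lemma gmul_cancel_l (a b c : G) : gmul a b = gmul a c -> b = c.
Proof.
  intro Habc.
  rewrite <- (gmul1l G b), <- (gmul1l G c), <- (gmulVl G a), <- !gmulA, Habc.
  reflexivity.
Qed.

Lemma gmul_eq1_inv (x y : G) : gmul x y = gone -> x = ginv y.
Proof.
  intro Hxy. rewrite <- (gmul1r G x), <- (gmulVr G y), gmulA, Hxy, gmul1l.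
  reflexivity.
Qed.

Lemma ginv_mul (x y : G) : ginv (gmul x y) = gmul (ginv y) (ginv x).
Proof.
  symmetry. apply gmul_eq1_inv.
  rewrite <- gmulA, (gmulA _ (ginv x)), gmulVl, gmul1l, gmulVl. reflexivity.
Qed.

Lemma ginv1 : ginv (@gone G) = gone.
Proof. symmetry. apply gmul_eq1_inv, gmul1l. Qed.

Lemma ginvK (x : G) : ginv (ginv x) = x.
Proof. symmetry. apply gmul_eq1_inv, gmulVr. Qed.

End GroupFacts.

Section HomFacts.
Variables (G H : Grp) (f : Hom G H).

Lemma hom1 : f gone = gone.
Proof.
  apply (gmul_cancel_l H (f gone)). rewrite <- hmul, gmul1l, gmul1r.
  reflexivity.
Qed.

Lemma homV (x : G) : f (ginv x) = ginv (f x).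
Proof. apply gmul_eq1_inv. rewrite <- hmul, gmulVl. apply hom1. Qed.

Lemma hom_injective :
  (forall x, f x = gone -> x = gone) -> forall x y, f x = f y -> x = y.
Proof.
  intros Hker x y Hxy.
  assert (Hdiv : gmul x (ginv y) = gone).
  { apply Hker. rewrite hmul, homV, Hxy. apply gmulVr. }
  rewrite (gmul_eq1_inv _ _ _ Hdiv), ginvK. reflexivity.
Qed.

Definition himage (y : H) : Prop := exists x, f x = y.

Lemma himage_subgroup : is_subgroup H himage.
Proof.
  split; [exists gone; apply hom1 |]. split.
  - intros u v [x <-] [y <-]. exists (gmul x y). apply hmul.
  - intros u [x <-]. exists (ginv x). apply homV.
Qed.

Lemma bijective_hom_isomorphic :
  (forall x y, f x = f y -> x = y) -> (forall y, himage y) -> isomorphic G H.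
Proof.
  intros Hinj Hsurj.
  pose (preim := fun y => proj1_sig (constructive_indefinite_description _ (Hsurj y))).
  assert (preimK : forall y, f (preim y) = y).
  { intro y. exact (proj2_sig (constructive_indefinite_description _ (Hsurj y))). }
  assert (preim_mul : forall u v, preim (gmul u v) = gmul (preim u) (preim v)).
  { intros u v. apply Hinj. rewrite hmul, !preimK. reflexivity. }
  exists f, (MkHom H G preim preim_mul). split; simpl.
  - intro x. apply Hinj, preimK.
  - exact preimK.
Qed.

End HomFacts.

Definition hcomp {G H K : Grp} (g : Hom H K) (f : Hom G H) : Hom G K.
Proof.
  refine (MkHom G K (fun x => g (f x)) _).
  intros x y. rewrite !hmul. reflexivity.
Defined.

Lemma isomorphic_sym (G H : Grp) : isomorphic G H -> isomorphic H G.
Proof. intros (f & g & gK & fK). exists g, f. split; assumption. Qed.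

Record perm (T : Type) := Perm {
  perm_fun :> T -> T;
  perm_inv : T -> T;
  perm_funK : forall x, perm_inv (perm_fun x) = x;
  perm_invK : forall x, perm_fun (perm_inv x) = x
}.
Arguments perm_inv {T} _ _.
Arguments perm_funK {T} _ _.
Arguments perm_invK {T} _ _.

Lemma perm_ext (T : Type) (p q : perm T) : (forall x, p x = q x) -> p = q.
Proof.
  intro Hpq.
  assert (Hfun : perm_fun T p = perm_fun T q) by (apply functional_extensionality; auto).
  assert (Hinv : perm_inv p = perm_inv q).
  { apply functional_extensionality. intro x.
    rewrite <- (perm_invK q x) at 1. rewrite <- Hpq. apply perm_funK. }
  destruct p as [f g fK gK], q as [f' g' fK' gK']; simpl in *. subst.
  rewrite (proof_irrelevance _ fK fK'), (proof_irrelevance _ gK gK').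
  reflexivity.
Qed.

Definition perm_mul {T : Type} (p q : perm T) : perm T.
Proof.
  refine (Perm T (fun x => p (q x)) (fun x => perm_inv q (perm_inv p x)) _ _);
    intro x; rewrite ?perm_funK, ?perm_invK; reflexivity.
Defined.

Definition perm_one (T : Type) : perm T :=
  Perm T (fun x => x) (fun x => x) (fun _ => eq_refl) (fun _ => eq_refl).

Definition perm_rev {T : Type} (p : perm T) : perm T :=
  Perm T (perm_inv p) p (perm_invK p) (perm_funK p).

Definition Sym (T : Type) : Grp.
Proof.
  refine (MkGrp (perm T) perm_mul (perm_one T) perm_rev _ _ _ _ _);
    intros; apply perm_ext; intros; simpl; auto using perm_funK, perm_invK.
Defined.

Section SubgroupSeparation.
Variables (A : Grp) (M : A -> Prop).
Hypothesis M_subgroup : is_subgroup A M.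

Definition translate (a : A) (P : A -> Prop) : A -> Prop :=
  fun y => P (gmul (ginv a) y).

Lemma translateK (a : A) (P : A -> Prop) : translate (ginv a) (translate a P) = P.
Proof.
  apply functional_extensionality. intro y. unfold translate.
  rewrite gmulA, ginvK, gmulVl, gmul1l. reflexivity.
Qed.

Lemma translateVK (a : A) (P : A -> Prop) : translate a (translate (ginv a) P) = P.
Proof. rewrite <- (ginvK A a) at 1. apply translateK. Qed.

Definition translate_perm (a : A) : perm (A -> Prop) :=
  Perm _ (translate a) (translate (ginv a)) (translateK a) (translateVK a).

Definition left_translation : Hom A (Sym (A -> Prop)).
Proof.
  refine (MkHom A (Sym (A -> Prop)) translate_perm _).
  intros a b. apply perm_ext. intro P. simpl.
  apply functional_extensionality. intro y. unfold translate.
  rewrite ginv_mul, gmulA. reflexivity.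
Defined.

Definition empty_subset : A -> Prop := fun _ => False.

Definition swap_fun (P : A -> Prop) : A -> Prop :=
  if excluded_middle_informative (P = M) then empty_subset
  else if excluded_middle_informative (P = empty_subset) then M else P.

Lemma swap_M : swap_fun M = empty_subset.
Proof. unfold swap_fun. destruct excluded_middle_informative; congruence. Qed.

Lemma swap_empty : swap_fun empty_subset = M.
Proof.
  unfold swap_fun.
  do 2 (destruct excluded_middle_informative; try congruence).
Qed.

Lemma swap_other (P : A -> Prop) : P <> M -> P <> empty_subset -> swap_fun P = P.
Proof.
  intros. unfold swap_fun.
  do 2 (destruct excluded_middle_informative; try congruence).
Qed.

Lemma swapK (P : A -> Prop) : swap_fun (swap_fun P) = P.
Proof.
  destruct (classic (P = M)) as [-> | HM]; [rewrite swap_M, swap_empty; reflexivity |].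
  destruct (classic (P = empty_subset)) as [-> | HE];
    [rewrite swap_empty, swap_M; reflexivity |].
  rewrite (swap_other P), (swap_other P); auto.
Qed.

Definition swap : perm (A -> Prop) := Perm _ swap_fun swap_fun swapK swapK.

Definition twisted_translation : Hom A (Sym (A -> Prop)).
Proof.
  refine (MkHom A (Sym (A -> Prop))
            (fun a => perm_mul (perm_mul swap (translate_perm a)) swap) _).
  intros a b. apply perm_ext. intro P. simpl. rewrite swapK.
  f_equal. apply functional_extensionality. intro y. unfold translate.
  rewrite ginv_mul, gmulA. reflexivity.
Defined.

Lemma translate_empty (a : A) : translate a empty_subset = empty_subset.
Proof. reflexivity. Qed.

Lemma translate_subgroup (m : A) : M m -> translate m M = M.
Proof.
  destruct M_subgroup as (_ & Mmul & Minv). intro Mm.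
  apply functional_extensionality. intro y. unfold translate.
  apply propositional_extensionality. split; intro My.
  - replace y with (gmul m (gmul (ginv m) y)) by
      (rewrite gmulA, gmulVr, gmul1l; reflexivity).
    apply Mmul; assumption.
  - apply Mmul; auto.
Qed.

(* Translation by [m] in [M] fixes [M] and the empty set, hence commutes with the swap. *)
Lemma translations_agree (m : A) :
  M m -> left_translation m = twisted_translation m.
Proof.
  intro Mm. apply perm_ext. intro P. simpl.
  destruct (classic (P = M)) as [-> | HM].
  { rewrite swap_M, translate_empty, swap_empty, translate_subgroup; auto. }
  destruct (classic (P = empty_subset)) as [-> | HE].
  { rewrite swap_empty, translate_subgroup, swap_M; auto. }
  rewrite (swap_other P), (swap_other (translate m P)); auto.
  - intro HMt. apply HM. rewrite <- (translateK m P), HMt.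
    apply translate_subgroup. apply M_subgroup; assumption.
  - intro Hempty. apply HE. rewrite <- (translateK m P), Hempty. reflexivity.
Qed.

(* On the empty set the twisted action yields the coset [a M], which contains
   [a] and so is neither empty nor [M]. *)
Lemma translations_differ (a : A) :
  ~ M a -> left_translation a <> twisted_translation a.
Proof.
  intros Ma Heq.
  assert (Hempty : left_translation a empty_subset = twisted_translation a empty_subset)
    by (rewrite Heq; reflexivity).
  simpl in Hempty. rewrite swap_empty, translate_empty in Hempty.
  assert (Ha : translate a M a) by (unfold translate; rewrite gmulVl; apply M_subgroup).
  rewrite swap_other in Hempty.
  - rewrite <- Hempty in Ha. exact Ha.
  - intro HMt. rewrite HMt in Ha. exact (Ma Ha).
  - intro HEt. rewrite HEt in Ha. exact Ha.
Qed.

End SubgroupSeparation.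

Lemma epi_surjective (G A : Grp) (f : Hom G A) :
  (forall (X : Grp) (g1 g2 : Hom A X),
     (forall x, g1 (f x) = g2 (f x)) -> forall a, g1 a = g2 a) ->
  forall a, himage G A f a.
Proof.
  intros Hepi a. apply NNPP. intro Ha.
  pose proof (himage_subgroup G A f) as Hsub.
  apply (translations_differ A (himage G A f) Hsub a Ha).
  apply Hepi. intro x.
  apply translations_agree; [exact Hsub | exists x; reflexivity].
Qed.

Section Reflection.
Variables (R : Grp -> Prop) (L : Grp -> Grp) (eta : forall G : Grp, Hom G (L G)).
Hypothesis reflection : is_reflection R L eta.

Lemma unit_kernel_subfunctor : subfunctor_id (unit_kernel L eta).
Proof.
  destruct reflection as [RL Huniv]. unfold unit_kernel. split.
  - intro G. split; [apply hom1 |]. split.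
    + intros x y Hx Hy. rewrite hmul, Hx, Hy. apply gmul1l.
    + intros x Hx. rewrite homV, Hx. apply ginv1.
  - intros G H f x Hx.
    destruct (Huniv G (L H) (RL H) (hcomp (eta H) f)) as [[g Hg] _].
    simpl in Hg. rewrite <- Hg, Hx. apply hom1.
Qed.

Lemma unit_epi_in_class (G X : Grp) (g1 g2 : Hom (L G) X) :
  R X -> (forall x, g1 (eta G x) = g2 (eta G x)) -> forall y, g1 y = g2 y.
Proof.
  intros RX Hagree.
  destruct reflection as [_ Huniv].
  destruct (Huniv G X RX (hcomp g2 (eta G))) as [_ Hunique].
  apply Hunique; [exact Hagree | reflexivity].
Qed.

Lemma unit_isomorphic_of_trivial_kernels :
  (forall G x, unit_kernel L eta G x -> x = gone) ->
  forall G, isomorphic G (L G).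
Proof.
  intros Hker G.
  assert (eta_inj : forall X, forall x y, eta X x = eta X y -> x = y)
    by (intro X; apply hom_injective, Hker).
  apply (bijective_hom_isomorphic G (L G) (eta G)); [apply eta_inj |].
  apply epi_surjective. intros X g1 g2 Hagree y.
  apply eta_inj.
  exact (unit_epi_in_class G (L X) (hcomp (eta X) g1) (hcomp (eta X) g2)
           (proj1 reflection X) (fun x => f_equal (eta X) (Hagree x)) y).
Qed.

End Reflection.

Theorem lemma3p9 (R : Grp -> Prop) (L : Grp -> Grp)
    (eta : forall G : Grp, Hom G (L G)) :
  proper_class R ->
  is_reflection R L eta ->
  subfunctor_id (unit_kernel L eta) /\ nontrivial_subfunctor (unit_kernel L eta).
Proof.
  intros [iso_closed_R [G0 notR_G0]] reflection.
  split; [exact (unit_kernel_subfunctor R L eta reflection) |].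
  apply NNPP. intro Htrivial.
  assert (Hker : forall G x, unit_kernel L eta G x -> x = gone).
  { intros G x Hx. apply NNPP. intro Hx1. apply Htrivial. exists G, x. auto. }
  apply notR_G0, (iso_closed_R (L G0)).
  - apply isomorphic_sym, (unit_isomorphic_of_trivial_kernels R L eta reflection Hker).
  - apply reflection.
Qed.
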